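(* Let $f:\mathbb{R}^{2}\to\mathbb{R}$ be smooth and either quasi normal or quasi split normal. Then for all $x,y\in\mathbb{R}$ and all $k_{1}\neq0$, $k_{2}\neq0$, the limits $F(k_{1},y)=\lim_{r\to\infty}\int_{-r}^{r}f(x,y)e^{-ik_{1}x}\,dx$ and $G(x,k_{2})=\lim_{r\to\infty}\int_{-r}^{r}f(x,y)e^{-ik_{2}y}\,dy$ both exist, and $y\mapsto F(k_{1},y)$ and $x\mapsto G(x,k_{2})$ are of moderate decrease (bounded by a constant times $|y|^{-2}$, resp. $|x|^{-2}$, for $|y|>1$, resp. $|x|>1$).
   Context: One-variable notions: a smooth $g:\mathbb{R}\setminus V\to\mathbb{R}$, $V\subset\mathbb{R}$ bounded closed, is analytic at infinity if there exist $\epsilon_{1},\epsilon_{2}>0$ such that $g(1/t)=\sum_{n\geq1}a_{n}t^{n}$ for $0<t<\epsilon_{1}$ and $g(1/t)=\sum_{n\geq1}b_{n}t^{n}$ for $-\epsilon_{2}<t<0$, with real coefficients and both power series absolutely convergent on the respective intervals. Two-variable notions: let $f:\mathbb{R}^{2}\setminus W\to\mathbb{R}$ be smooth with $W$ closed and bounded (here $W=\emptyset$). $f$ is of very moderate decrease if there is $C>0$ with $|f(x,y)|\leq\frac{C}{|(x,y)|}$ for $|(x,y)|>1$, and of moderate decrease if $|f(x,y)|\leq\frac{C}{|(x,y)|^{2}}$ for $|(x,y)|>1$. For fixed $x$ write $f_{x}(y)=f(x,y)$ and for fixed $y$ write $f_{y}(x)=f(x,y)$. Conditions: (i) for every $x$,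 $f_{x}$ is analytic at infinity; (ii) for every $y$, $f_{y}$ is analytic at infinity; (iii) $f$ is of very moderate decrease; (iv) $\frac{\partial f}{\partial x}$ and $\frac{\partial f}{\partial y}$ are of moderate decrease. $f$ is quasi normal if (i)–(iv) hold and (v)': for sufficiently large $x$, the zeros of $f_{x}$ are contained in a union $(-M_{x},-N_{x})\cup(N_{x},M_{x})$ of bounded intervals with $M_{x}-N_{x}$ uniformly bounded in $x$, and similarly for $(f_{x})'$, $(f_{x})''$ (each with its own such intervals), and for $f_{y},(f_{y})',(f_{y})''$ with sufficiently large $y$. $f$ is quasi split normal if (i)–(iv) hold and (v)'': for sufficiently large $(x,y)$, $f=f_{1}+f_{2}$ with $f_{1},f_{2}$ quasi normal and $f,f_{1},f_{2}$ smooth. *)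

From Stdlib Require Import Reals List.
From Coquelicot Require Import Coquelicot.
Open Scope R_scope.

Definition norm2 (x y : R) : R := sqrt (x ^ 2 + y ^ 2).

Definition dx (f : R -> R -> R) : R -> R -> R :=
  fun x y => Derive (fun t => f t y) x.
Definition dy (f : R -> R -> R) : R -> R -> R :=
  fun x y => Derive (fun t => f x t) y.

(* iterated partial derivative along a word of directions (true = x, false = y) *)
Fixpoint iter_partial (l : list bool) (f : R -> R -> R) : R -> R -> R :=
  match l with
  | nil => f
  | b :: l' => if b then dx (iter_partial l' f) else dy (iter_partial l' f)
  end.

Definition smooth2 (f : R -> R -> R) : Prop :=
  forall l : list bool,
    (forall x y, ex_derive (fun t => iter_partial l f t y) x /\
                 ex_derive (fun t => iter_partial l f x t) y) /\
    (forall x y, continuous (fun p : R * R => iter_partial l f (fst p) (snd p)) (x, y)).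

Definition analytic_at_infinity (g : R -> R) : Prop :=
  exists (eps1 eps2 : R) (a b : nat -> R),
    0 < eps1 /\ 0 < eps2 /\
    (forall t, 0 < t < eps1 ->
       is_series (fun n => a (S n) * t ^ (S n)) (g (/ t)) /\
       ex_series (fun n => Rabs (a (S n) * t ^ (S n)))) /\
    (forall t, - eps2 < t < 0 ->
       is_series (fun n => b (S n) * t ^ (S n)) (g (/ t)) /\
       ex_series (fun n => Rabs (b (S n) * t ^ (S n)))).

Definition very_moderate_decrease (f : R -> R -> R) : Prop :=
  exists C, 0 < C /\ forall x y, 1 < norm2 x y -> Rabs (f x y) <= C / norm2 x y.

Definition moderate_decrease (f : R -> R -> R) : Prop :=
  exists C, 0 < C /\ forall x y, 1 < norm2 x y -> Rabs (f x y) <= C / (norm2 x y) ^ 2.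

Definition cond_i_iv (f : R -> R -> R) : Prop :=
  (forall x, analytic_at_infinity (fun y => f x y)) /\
  (forall y, analytic_at_infinity (fun x => f x y)) /\
  very_moderate_decrease f /\
  moderate_decrease (dx f) /\ moderate_decrease (dy f).

Definition zeros_localized (h : R -> R -> R) : Prop :=
  exists S0 B, forall s, S0 < Rabs s ->
    exists N M, 0 <= N /\ M - N <= B /\
      forall t, h s t = 0 -> (- M < t < - N \/ N < t < M).

Definition cond_v' (f : R -> R -> R) : Prop :=
  zeros_localized (fun x y => f x y) /\
  zeros_localized (fun x y => Derive (fun t => f x t) y) /\
  zeros_localized (fun x y => Derive (fun u => Derive (fun t => f x t) u) y) /\
  zeros_localized (fun y x => f x y) /\
  zeros_localized (fun y x => Derive (fun t => f t y) x) /\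
  zeros_localized (fun y x => Derive (fun u => Derive (fun t => f t y) u) x).

Definition quasi_normal (f : R -> R -> R) : Prop :=
  cond_i_iv f /\ cond_v' f.

Definition quasi_split_normal (f : R -> R -> R) : Prop :=
  cond_i_iv f /\
  exists (R0 : R) (f1 f2 : R -> R -> R),
    smooth2 f1 /\ smooth2 f2 /\ quasi_normal f1 /\ quasi_normal f2 /\
    forall x y, R0 < norm2 x y -> f x y = f1 x y + f2 x y.

From Stdlib Require Import Reals Lra Classical List.
From Coquelicot Require Import Coquelicot.
Open Scope R_scope.

(* Let w be cos (k .) or - sin (k .), v a bounded primitive of w and U a bounded
   primitive of v. Integrating by parts against v turns the integral of f x y * w y
   over [-r, r] into boundary terms, which vanish as r -> oo because f = O(1/|(x,y)|),
   minus the integral of dy f x y * v y. The latter integrand is O(1/(x^2 + y^2)),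
   hence O(1/(1 + y^2)) as soon as |y| > 1 or |x| > 1: comparison with the primitive
   atan gives convergence, and for |x| > 1 a bound uniform in x.
   For large |x| the zeros of dy (dy f) x lie in two intervals of bounded length,
   off which dy f x is monotone. A second integration by parts, against U, bounds the
   monotone pieces by a multiple of sup |dy f x| = O(1/x^2), and the two short
   intervals contribute O(1/x^2) directly; a quasi split normal f is handled by
   adding these estimates for f1 and f2. The transform in x is the transform in y of
   f with its variables swapped, since all hypotheses are symmetric. *)

Lemma Rabs_sub3_le (x y z : R) : Rabs (x - y - z) <= Rabs x + Rabs y + Rabs z.
Proof. unfold Rabs; repeat destruct Rcase_abs; lra. Qed.

Lemma Rabs_add3_le (x y z : R) : Rabs (x + y + z) <= Rabs x + Rabs y + Rabs z.
Proof. unfold Rabs; repeat destruct Rcase_abs; lra. Qed.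

Lemma Rabs_mul_le (x y X Y : R) : Rabs x <= X -> Rabs y <= Y -> Rabs (x * y) <= X * Y.
Proof. intros; rewrite Rabs_mult; apply Rmult_le_compat; auto using Rabs_pos. Qed.

Lemma Rdiv_le_contravar (C a b : R) : 0 <= C -> 0 < a -> a <= b -> C / b <= C / a.
Proof. intros; unfold Rdiv; apply Rmult_le_compat_l; [|apply Rinv_le_contravar]; auto. Qed.

Lemma one_lt_sq (y : R) : 1 < Rabs y -> 1 < y ^ 2.
Proof. intros H. rewrite <- pow2_abs. pose proof (Rabs_pos y). nra. Qed.

Lemma Rabs_div_le_inv (a b : R) : Rabs a <= 1 -> Rabs (a / b) <= / Rabs b.
Proof.
  intros Ha. destruct (Req_dec b 0) as [->|Hb].
  - unfold Rdiv. rewrite Rinv_0, Rmult_0_r, Rabs_R0, Rinv_0. lra.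
  - unfold Rdiv. rewrite Rabs_mult, Rabs_inv.
    apply (Rle_trans _ (1 * / Rabs b)); [|lra].
    apply Rmult_le_compat_r; auto. apply Rlt_le, Rinv_0_lt_compat, Rabs_pos_lt, Hb.
Qed.

Lemma sqrt_sum_sq_le (a b A B : R) : Rabs a <= A -> Rabs b <= B -> sqrt (a ^ 2 + b ^ 2) <= A + B.
Proof.
  intros Ha Hb. pose proof (Rabs_pos a). pose proof (Rabs_pos b).
  rewrite <- (sqrt_pow2 (A + B)) by lra. apply sqrt_le_1_alt.
  rewrite <- (pow2_abs a), <- (pow2_abs b). nra.
Qed.

Lemma continuous_of_is_derive (u du : R -> R) (x : R) :
  is_derive u x (du x) -> continuous u x.
Proof. intros H. apply (ex_derive_continuous (V := R_NormedModule)). now exists (du x). Qed.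

Lemma ex_RInt_of_continuous (f : R -> R) (a b : R) :
  (forall x, continuous f x) -> ex_RInt f a b.
Proof. intros H. apply (ex_RInt_continuous (V := R_CompleteNormedModule)). intros; apply H. Qed.

Lemma RInt_Chasles_continuous (f : R -> R) (a b c : R) :
  (forall x, continuous f x) -> RInt f a b + RInt f b c = RInt f a c.
Proof. intros H. apply (RInt_Chasles (V := R_CompleteNormedModule)); now apply ex_RInt_of_continuous. Qed.

Lemma RInt_is_derive (g dg : R -> R) (a b : R) :
  (forall x, is_derive g x (dg x)) -> (forall x, continuous dg x) ->
  RInt dg a b = g b - g a.
Proof.
  intros Hg Hdg. apply (is_RInt_unique (V := R_CompleteNormedModule)).
  now apply (is_RInt_derive (V := R_CompleteNormedModule)).
Qed.

Lemma RInt_mul_by_parts (u du v dv : R -> R) (a b : R) :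
  (forall x, is_derive u x (du x)) -> (forall x, is_derive v x (dv x)) ->
  (forall x, continuous du x) -> (forall x, continuous dv x) ->
  RInt (fun x => u x * dv x) a b = u b * v b - u a * v a - RInt (fun x => du x * v x) a b.
Proof.
  intros Hu Hv Cdu Cdv.
  assert (Cu : forall x, continuous u x) by (intros; eapply continuous_of_is_derive; apply Hu).
  assert (Cv : forall x, continuous v x) by (intros; eapply continuous_of_is_derive; apply Hv).
  assert (Hprod : RInt (fun x => du x * v x + u x * dv x) a b = u b * v b - u a * v a).
  { apply (RInt_is_derive (fun x => u x * v x)).
    - intros x. apply (is_derive_mult u v); auto. intros; apply Rmult_comm.
    - intros x. apply (continuous_plus (fun x => du x * v x) (fun x => u x * dv x));
        apply (continuous_mult (K := R_AbsRing)); auto. }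
  rewrite (RInt_plus (V := R_CompleteNormedModule)) in Hprod
    by (apply ex_RInt_of_continuous; intros; apply (continuous_mult (K := R_AbsRing)); auto).
  simpl in Hprod. unfold plus in Hprod; simpl in Hprod. lra.
Qed.

Lemma continuous_nonvanishing_sign (g : R -> R) (a b : R) :
  (forall x, continuous g x) -> (forall x, a < x < b -> g x <> 0) ->
  (forall x, a <= x <= b -> 0 <= g x) \/ (forall x, a <= x <= b -> g x <= 0).
Proof.
  intros Hc Hz.
  destruct (classic (forall x, a <= x <= b -> 0 <= g x)) as [H|H]; [now left | right].
  apply not_all_ex_not in H as [p Hp]. apply imply_to_and in Hp as [Hp Hgp].
  intros q Hq. apply Rnot_lt_le. intros Hgq.
  assert (Cg : continuity g) by (intros x; apply continuity_pt_filterlim, Hc).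
  destruct (IVT_gen g p q 0 Cg) as [z [Hz1 Hz2]].
  { unfold Rmin, Rmax; destruct Rle_dec; lra. }
  apply (Hz z); auto.
  assert (z <> p) by (intros ->; lra). assert (z <> q) by (intros ->; lra).
  revert Hz1; unfold Rmin, Rmax; destruct Rle_dec; lra.
Qed.

Lemma abs_RInt_mul_le_of_nonvanishing (g U : R -> R) (L a b : R) : a <= b ->
  (forall x, continuous g x) -> (forall x, continuous U x) ->
  (forall x, a < x < b -> g x <> 0) -> (forall x, Rabs (U x) <= L) ->
  Rabs (RInt (fun x => g x * U x) a b) <= L * Rabs (RInt g a b).
Proof.
  intros Hab Cg CU Hz HU.
  assert (CgU : forall x, continuous (fun x => g x * U x) x)
    by (intros; apply (continuous_mult (K := R_AbsRing)); auto).
  assert (signed : forall s, Rabs s = 1 -> (forall x, a <= x <= b -> 0 <= s * g x) ->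
            Rabs (RInt (fun x => g x * U x) a b) <= L * Rabs (RInt g a b)).
  { intros s Hs Hpos.
    eapply Rle_trans; [apply abs_RInt_le; auto using ex_RInt_of_continuous|].
    eapply Rle_trans; [apply (RInt_le _ (fun x => L * s * g x))|].
    - exact Hab.
    - apply ex_RInt_of_continuous. intros.
      apply (continuous_comp (fun x => g x * U x) Rabs); auto using continuous_Rabs.
    - apply ex_RInt_of_continuous. intros.
      apply (continuous_mult (K := R_AbsRing)); auto using continuous_const.
    - intros x Hx. rewrite Rabs_mult. specialize (Hpos x ltac:(lra)).
      replace (Rabs (g x)) with (s * g x)
        by (rewrite <- (Rabs_pos_eq _ Hpos), Rabs_mult, Hs; ring).
      rewrite (Rmult_comm (s * g x)), Rmult_assoc. apply Rmult_le_compat_r; auto.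
    - replace (RInt (fun x => L * s * g x) a b) with (L * s * RInt g a b)
        by (symmetry; apply (RInt_scal (V := R_CompleteNormedModule)); auto using ex_RInt_of_continuous).
      rewrite Rmult_assoc. assert (0 <= L) by (specialize (HU a); pose proof (Rabs_pos (U a)); lra).
      apply Rmult_le_compat_l; auto.
      rewrite <- (Rmult_1_l (Rabs (RInt g a b))), <- Hs, <- Rabs_mult. apply Rle_abs. }
  destruct (continuous_nonvanishing_sign g a b Cg Hz) as [Hpos|Hneg].
  - apply (signed 1); [apply Rabs_R1|]. intros x Hx. specialize (Hpos x Hx). lra.
  - apply (signed (-1)); [rewrite Rabs_left by lra; lra|]. intros x Hx. specialize (Hneg x Hx). lra.
Qed.

Definition clamp (a b x : R) : R := Rmax a (Rmin b x).

Ltac clamp_cases := unfold clamp, Rmax, Rmin in *; repeat destruct Rle_dec; lra.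

Lemma clamp_bounds (a b x : R) : a <= b -> a <= clamp a b x <= b.
Proof. intros; clamp_cases. Qed.

Lemma clamp_le_clamp (a b x y : R) : a <= b -> x <= y ->
  clamp a b x <= clamp a b y /\ clamp a b y - clamp a b x <= y - x.
Proof. intros; split; clamp_cases. Qed.

Lemma lt_of_lt_clamp (a b x z : R) : a <= b -> a < z -> z < clamp a b x -> z < x.
Proof. intros; clamp_cases. Qed.

Lemma gt_of_clamp_lt (a b x z : R) : a <= b -> z < b -> clamp a b x < z -> x < z.
Proof. intros; clamp_cases. Qed.

Section Oscillatory_integral.

Variables (g dg S U : R -> R) (K L Ls : R).
Hypothesis g_derive : forall x, is_derive g x (dg x).
Hypothesis dg_continuous : forall x, continuous dg x.
Hypothesis U_derive : forall x, is_derive U x (S x).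
Hypothesis S_continuous : forall x, continuous S x.
Hypothesis g_bound : forall x, Rabs (g x) <= K.
Hypothesis U_bound : forall x, Rabs (U x) <= L.
Hypothesis S_bound : forall x, Rabs (S x) <= Ls.

Let gS_continuous x : continuous (fun x => g x * S x) x.
Proof.
  apply (continuous_mult (K := R_AbsRing)); auto.
  eapply continuous_of_is_derive; apply g_derive.
Qed.

(* Integrating by parts against [U]: as [dg] keeps a sign, [RInt (Rabs dg)] is [Rabs (g b - g a)]. *)
Lemma abs_RInt_mul_le_monotone (a b : R) : a <= b -> (forall x, a < x < b -> dg x <> 0) ->
  Rabs (RInt (fun x => g x * S x) a b) <= 4 * L * K.
Proof.
  intros Hab Hz.
  assert (L0 : 0 <= L) by (specialize (U_bound a); pose proof (Rabs_pos (U a)); lra).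
  assert (Hvar : Rabs (RInt (fun x => dg x * U x) a b) <= L * Rabs (g b - g a)).
  { rewrite <- (RInt_is_derive g dg a b) by auto.
    apply abs_RInt_mul_le_of_nonvanishing; auto.
    intros x. exact (continuous_of_is_derive U S x (U_derive x)). }
  assert (Hincr : Rabs (g b - g a) <= 2 * K).
  { unfold Rminus. eapply Rle_trans; [apply Rabs_triang|]. rewrite Rabs_Ropp.
    pose proof (g_bound a). pose proof (g_bound b). lra. }
  pose proof (Rmult_le_compat_l L _ _ L0 Hincr).
  pose proof (Rabs_mul_le _ _ _ _ (g_bound b) (U_bound b)).
  pose proof (Rabs_mul_le _ _ _ _ (g_bound a) (U_bound a)).
  rewrite (RInt_mul_by_parts g dg U S a b) by auto.
  eapply Rle_trans; [apply Rabs_sub3_le|]. lra.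
Qed.

Lemma abs_RInt_mul_le_length (a b : R) : a <= b ->
  Rabs (RInt (fun x => g x * S x) a b) <= (b - a) * (K * Ls).
Proof.
  intros Hab. apply abs_RInt_le_const; auto using ex_RInt_of_continuous.
  intros t _. apply Rabs_mul_le; auto.
Qed.

Lemma abs_RInt_mul_le_zeros_in (p q B a b : R) : a <= b -> 0 <= B -> q - p <= B ->
  (forall x, a < x < b -> dg x = 0 -> p < x < q) ->
  Rabs (RInt (fun x => g x * S x) a b) <= 8 * L * K + B * (K * Ls).
Proof.
  intros Hab HB Hpq Hz.
  (* Clamping [Rmax p q] rather than [q] keeps [c1 <= c2] when [q < p]. *)
  pose proof (fun x => lt_of_lt_clamp a b p x Hab) as Hc1.
  pose proof (fun x => gt_of_clamp_lt a b (Rmax p q) x Hab) as Hc2.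
  pose proof (clamp_bounds a b p Hab) as Hc1_in.
  pose proof (clamp_bounds a b (Rmax p q) Hab) as Hc2_in.
  destruct (clamp_le_clamp a b p (Rmax p q) Hab (Rmax_l p q)) as [H12 Hlen].
  set (c1 := clamp a b p) in *. set (c2 := clamp a b (Rmax p q)) in *.
  assert (Hmax : Rmax p q - p <= B) by (unfold Rmax; destruct Rle_dec; lra).
  rewrite <- (RInt_Chasles_continuous _ a c1 b), <- (RInt_Chasles_continuous _ c1 c2 b)
    by apply gS_continuous.
  pose proof (abs_RInt_mul_le_length c1 c2 H12) as Hmid.
  assert (Hleft : Rabs (RInt (fun x => g x * S x) a c1) <= 4 * L * K).
  { apply abs_RInt_mul_le_monotone; [lra|]. intros x Hx Hdx.
    pose proof (Hc1 x ltac:(lra) ltac:(lra)).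
    specialize (Hz x ltac:(lra) Hdx). lra. }
  assert (Hright : Rabs (RInt (fun x => g x * S x) c2 b) <= 4 * L * K).
  { apply abs_RInt_mul_le_monotone; [lra|]. intros x Hx Hdx.
    pose proof (Hc2 x ltac:(lra) ltac:(lra)).
    pose proof (Rmax_r p q). specialize (Hz x ltac:(lra) Hdx). lra. }
  assert (KLs0 : 0 <= K * Ls) by (pose proof (Rabs_mul_le _ _ _ _ (g_bound a) (S_bound a));
                           pose proof (Rabs_pos (g a * S a)); lra).
  pose proof (Rmult_le_compat_r (K * Ls) _ _ ltac:(lra) (Rle_trans _ _ _ Hlen Hmax)).
  rewrite <- Rplus_assoc. eapply Rle_trans; [apply Rabs_add3_le|]. lra.
Qed.

Lemma abs_RInt_mul_le_zeros_localized (N M B a b : R) : a <= b -> 0 <= N -> 0 <= B -> M - N <= B ->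
  (forall x, dg x = 0 -> - M < x < - N \/ N < x < M) ->
  Rabs (RInt (fun x => g x * S x) a b) <= 16 * L * K + 2 * B * (K * Ls).
Proof.
  intros Hab HN HB HMN Hz.
  pose proof (fun x => lt_of_lt_clamp a b 0 x Hab) as Hc1.
  pose proof (fun x => gt_of_clamp_lt a b 0 x Hab) as Hc2.
  pose proof (clamp_bounds a b 0 Hab) as Hc_in. set (c := clamp a b 0) in *.
  rewrite <- (RInt_Chasles_continuous _ a c b) by apply gS_continuous.
  assert (Hleft : Rabs (RInt (fun x => g x * S x) a c) <= 8 * L * K + B * (K * Ls)).
  { apply (abs_RInt_mul_le_zeros_in (- M) (- N)); try lra. intros x Hx Hdx.
    pose proof (Hc1 x ltac:(lra) ltac:(lra)). destruct (Hz x Hdx); lra. }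
  assert (Hright : Rabs (RInt (fun x => g x * S x) c b) <= 8 * L * K + B * (K * Ls)).
  { apply (abs_RInt_mul_le_zeros_in N M); try lra. intros x Hx Hdx.
    pose proof (Hc2 x ltac:(lra) ltac:(lra)). destruct (Hz x Hdx); lra. }
  eapply Rle_trans; [apply Rabs_triang|]. lra.
Qed.

End Oscillatory_integral.

Lemma abs_RInt_le_atan (phi : R -> R) (C a b : R) : a <= b -> (forall t, continuous phi t) ->
  (forall t, a < t < b -> Rabs (phi t) <= C / (1 + t ^ 2)) ->
  Rabs (RInt phi a b) <= C * (atan b - atan a).
Proof.
  intros Hab Hc Hb.
  assert (Hpos : forall t, 0 < 1 + t ^ 2) by (intros t; pose proof (pow2_ge_0 t); lra).
  assert (Hd : forall t, is_derive (fun t => C * atan t) t (C / (1 + t ^ 2))).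
  { intros t. auto_derive; [exact I|]. unfold Rsqr. field. specialize (Hpos t). simpl in Hpos. lra. }
  assert (Cd : forall t, continuous (fun t => C / (1 + t ^ 2)) t).
  { intros t. apply (ex_derive_continuous (V := R_NormedModule)). auto_derive. specialize (Hpos t). lra. }
  rewrite Rmult_minus_distr_l, <- (RInt_is_derive _ _ a b Hd Cd).
  eapply Rle_trans; [apply abs_RInt_le; auto using ex_RInt_of_continuous|].
  apply RInt_le; auto using ex_RInt_of_continuous.
  apply ex_RInt_of_continuous. intros. apply (continuous_comp phi Rabs); auto using continuous_Rabs.
Qed.

Lemma is_lim_atan_p_infty : is_lim atan p_infty (PI / 2).
Proof.
  apply (is_lim_ext_loc (fun r => PI / 2 - atan (/ r))).
  { exists 0. intros r Hr. rewrite atan_inv; lra. }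
  replace (Finite (PI / 2)) with (Finite (PI / 2 - atan 0)) by (rewrite atan_0; f_equal; ring).
  apply (is_lim_minus _ _ _ (PI / 2) (atan 0)).
  - apply is_lim_const.
  - apply (is_lim_comp atan Rinv p_infty (atan 0) 0).
    + apply is_lim_continuity. apply continuity_pt_filterlim, continuous_atan.
    + apply (is_lim_inv (fun y => y) p_infty p_infty); [apply is_lim_id | discriminate].
    + exists 0. intros r Hr. injection 1. apply Rinv_neq_0_compat. lra.
  - reflexivity.
Qed.

Lemma ex_finite_lim_of_increments_le (Q A : R -> R) (c r0 : R) :
  (forall u w, r0 <= u <= w -> Rabs (Q w - Q u) <= c * Rabs (A w - A u)) ->
  ex_finite_lim A p_infty -> ex_finite_lim Q p_infty.
Proof.
  intros Hinc [l Hl].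
  assert (Hsym : forall u w, r0 <= u -> r0 <= w -> Rabs (Q w - Q u) <= c * Rabs (A w - A u)).
  { intros u w Hu Hw. destruct (Rle_dec u w); [apply Hinc; lra|].
    rewrite (Rabs_minus_sym (Q w)), (Rabs_minus_sym (A w)). apply Hinc; lra. }
  destruct (proj1 (filterlim_locally_cauchy (F := Rbar_locally p_infty) Q)) as [l' Hl'].
  2: { now exists l'. }
  intros eps.
  assert (Hd : 0 < eps / (Rabs c + 1))
    by (apply Rdiv_lt_0_compat; [apply cond_pos | pose proof (Rabs_pos c); lra]).
  destruct (proj2 (filterlim_locally_cauchy (F := Rbar_locally p_infty) A) (ex_intro _ l Hl)
              (mkposreal _ Hd)) as [P [HP HPc]].
  exists (fun r => P r /\ r0 <= r). split.
  - apply filter_and; [exact HP | now exists r0; intros; lra].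
  - intros u w [Pu Hu] [Pw Hw]. change (Rabs (Q w - Q u) < eps).
    specialize (HPc u w Pu Pw). change (Rabs (A w - A u) < eps / (Rabs c + 1)) in HPc.
    eapply Rle_lt_trans; [apply Hsym; auto|].
    eapply Rle_lt_trans; [apply Rmult_le_compat_r; [apply Rabs_pos | apply Rle_abs]|].
    pose proof (Rabs_pos c).
    assert (Hc : Rabs c * Rabs (A w - A u) <= Rabs c * (eps / (Rabs c + 1)))
      by (apply Rmult_le_compat_l; lra).
    replace (Rabs c * (eps / (Rabs c + 1))) with (eps - eps / (Rabs c + 1)) in Hc by (field; lra).
    lra.
Qed.

Lemma ex_finite_lim_RInt_sym (phi : R -> R) (C : R) : (forall t, continuous phi t) ->
  (forall t, 1 < Rabs t -> Rabs (phi t) <= C / (1 + t ^ 2)) ->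
  ex_finite_lim (fun r => RInt phi (- r) r) p_infty.
Proof.
  intros Hc Hb. apply (ex_finite_lim_of_increments_le _ atan (2 * C) 1).
  - intros u w Hu.
    rewrite <- (RInt_Chasles_continuous phi (- w) (- u) w),
            <- (RInt_Chasles_continuous phi (- u) u w) by exact Hc.
    replace (RInt phi (- w) (- u) + (RInt phi (- u) u + RInt phi u w) - RInt phi (- u) u)
      with (RInt phi (- w) (- u) + RInt phi u w) by ring.
    pose proof (abs_RInt_le_atan phi C (- w) (- u) ltac:(lra) Hc) as Hleft.
    pose proof (abs_RInt_le_atan phi C u w ltac:(lra) Hc) as Hright.
    rewrite !atan_opp in Hleft.
    assert (Hatan : atan u <= atan w)
      by (destruct (Req_dec u w) as [->|]; [lra | apply Rlt_le, atan_increasing; lra]).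
    rewrite (Rabs_pos_eq (atan w - atan u)) by lra.
    eapply Rle_trans; [apply Rabs_triang|].
    enough (Rabs (RInt phi (- w) (- u)) <= C * (atan w - atan u) /\
            Rabs (RInt phi u w) <= C * (atan w - atan u)) by lra.
    split; [replace (C * (atan w - atan u)) with (C * (- atan u - - atan w)) by ring;
            apply Hleft | apply Hright];
      intros t Ht; apply Hb; unfold Rabs; destruct Rcase_abs; lra.
  - exists (PI / 2). apply is_lim_atan_p_infty.
Qed.

Lemma Rabs_lim_le (Q : R -> R) (l B r0 : R) : is_lim Q p_infty l ->
  (forall r, r0 < r -> Rabs (Q r) <= B) -> Rabs l <= B.
Proof.
  intros Hl HB.
  apply (is_lim_le_loc (fun r => Rabs (Q r)) (fun _ => B) p_infty (Rabs l) B).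
  - now exists r0.
  - apply (is_lim_Rabs Q p_infty l Hl).
  - apply is_lim_const.
Qed.

Lemma is_lim_0_of_abs_le_inv (h : R -> R) (c : R) :
  (forall r, 1 < r -> Rabs (h r) <= c / r) -> is_lim h p_infty 0.
Proof.
  intros Hh.
  assert (Hinv : is_lim (fun r => c / r) p_infty 0).
  { replace (Finite 0) with (Rbar_mult c (Rbar_inv p_infty)) by (simpl; f_equal; ring).
    apply is_lim_scal_l, (is_lim_inv (fun y => y)); [apply is_lim_id | discriminate]. }
  apply (is_lim_le_le_loc (fun r => - (c / r)) (fun r => c / r)).
  - exists 1. intros r Hr. specialize (Hh r Hr). revert Hh; unfold Rabs; destruct Rcase_abs; lra.
  - replace (Finite 0) with (Rbar_opp 0) by (simpl; f_equal; ring). now apply is_lim_opp.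
  - exact Hinv.
Qed.

Lemma is_lim_RInt_sym_by_parts (phi g v w : R -> R) (Cphi L l : R) :
  (forall t, is_derive phi t (g t)) -> (forall t, continuous g t) ->
  (forall t, is_derive v t (w t)) -> (forall t, continuous w t) ->
  (forall t, Rabs (v t) <= L) -> (forall t, 1 < Rabs t -> Rabs (phi t) <= Cphi / Rabs t) ->
  is_lim (fun r => RInt (fun t => g t * v t) (- r) r) p_infty l ->
  is_lim (fun r => RInt (fun t => phi t * w t) (- r) r) p_infty (- l).
Proof.
  intros Hphi Cg Hv Cw HL Hdec Hlim.
  assert (Hbd : is_lim (fun r => phi r * v r - phi (- r) * v (- r)) p_infty 0).
  { apply (is_lim_0_of_abs_le_inv _ (2 * (Cphi * L))). intros r Hr.
    pose proof (Rabs_mul_le _ _ _ _ (Hdec r ltac:(rewrite Rabs_pos_eq; lra)) (HL r)) as Hplus.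
    pose proof (Rabs_mul_le _ _ _ _ (Hdec (- r) ltac:(rewrite Rabs_Ropp, Rabs_pos_eq; lra)) (HL (- r)))
      as Hminus.
    rewrite Rabs_Ropp in Hminus. rewrite (Rabs_pos_eq r) in Hplus, Hminus by lra.
    replace (2 * (Cphi * L) / r) with (Cphi / r * L + Cphi / r * L) by (field; lra).
    unfold Rminus. eapply Rle_trans; [apply Rabs_triang|]. rewrite Rabs_Ropp. lra. }
  apply (is_lim_ext (fun r => (phi r * v r - phi (- r) * v (- r)) - RInt (fun t => g t * v t) (- r) r)).
  { intros r. symmetry. apply RInt_mul_by_parts; auto. }
  apply (is_lim_minus _ _ _ 0 l); auto.
  unfold is_Rbar_minus, is_Rbar_plus. simpl. f_equal. f_equal. ring.
Qed.

Lemma norm2_sym (x y : R) : norm2 x y = norm2 y x.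
Proof. unfold norm2. f_equal. ring. Qed.

Lemma norm2_ge_r (x y : R) : Rabs y <= norm2 x y.
Proof.
  unfold norm2. rewrite <- sqrt_Rsqr_abs. apply sqrt_le_1_alt.
  unfold Rsqr. pose proof (pow2_ge_0 x). lra.
Qed.

Lemma norm2_ge_l (x y : R) : Rabs x <= norm2 x y.
Proof. rewrite norm2_sym. apply norm2_ge_r. Qed.

Lemma very_moderate_decrease_y (f : R -> R -> R) : very_moderate_decrease f ->
  exists C, forall x y, 1 < Rabs y -> Rabs (f x y) <= C / Rabs y.
Proof.
  intros [C [HC Hf]]. exists C. intros x y Hy.
  pose proof (norm2_ge_r x y).
  eapply Rle_trans; [apply Hf; lra | apply Rdiv_le_contravar; lra].
Qed.

Lemma moderate_decrease_sq (g : R -> R -> R) : moderate_decrease g ->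
  exists C, 0 < C /\ forall x y, 1 < x ^ 2 + y ^ 2 -> Rabs (g x y) <= C / (x ^ 2 + y ^ 2).
Proof.
  intros [C [HC Hg]]. exists C. split; [exact HC|]. intros x y Hxy.
  assert (Hsq : norm2 x y ^ 2 = x ^ 2 + y ^ 2) by (apply pow2_sqrt; lra).
  rewrite <- Hsq. apply Hg. rewrite <- sqrt_1. unfold norm2. apply sqrt_lt_1_alt. lra.
Qed.

Definition swap_xy (f : R -> R -> R) : R -> R -> R := fun x y => f y x.

Lemma iter_partial_swap_xy (l : list bool) (f : R -> R -> R) :
  iter_partial l (swap_xy f) = swap_xy (iter_partial (map negb l) f).
Proof. induction l as [|[] l IH]; simpl; rewrite ?IH; reflexivity. Qed.

Lemma smooth2_swap_xy (f : R -> R -> R) : smooth2 f -> smooth2 (swap_xy f).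
Proof.
  intros Hs l. rewrite iter_partial_swap_xy.
  destruct (Hs (map negb l)) as [Hd Hc]. split.
  - intros x y. destruct (Hd y x). now split.
  - intros x y.
    apply (continuous_comp_2 snd fst (iter_partial (map negb l) f) (x, y));
      [apply continuous_snd | apply continuous_fst | apply Hc].
Qed.

Lemma very_moderate_decrease_swap_xy (f : R -> R -> R) :
  very_moderate_decrease f -> very_moderate_decrease (swap_xy f).
Proof.
  intros [C [HC Hf]]. exists C. split; [exact HC|].
  intros x y. rewrite (norm2_sym x y). apply Hf.
Qed.

Lemma moderate_decrease_swap_xy (f : R -> R -> R) :
  moderate_decrease f -> moderate_decrease (swap_xy f).
Proof.
  intros [C [HC Hf]]. exists C. split; [exact HC|].
  intros x y. rewrite (norm2_sym x y). apply Hf.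
Qed.

Lemma cond_i_iv_swap_xy (f : R -> R -> R) : cond_i_iv f -> cond_i_iv (swap_xy f).
Proof.
  intros [Hx [Hy [Hv [Hdx Hdy]]]].
  repeat split; auto using very_moderate_decrease_swap_xy.
  - exact (moderate_decrease_swap_xy _ Hdy).
  - exact (moderate_decrease_swap_xy _ Hdx).
Qed.

Lemma quasi_normal_swap_xy (f : R -> R -> R) : quasi_normal f -> quasi_normal (swap_xy f).
Proof.
  intros [Hc [Z1 [Z2 [Z3 [Z4 [Z5 Z6]]]]]].
  split; [now apply cond_i_iv_swap_xy | repeat split; assumption].
Qed.

Lemma quasi_split_normal_swap_xy (f : R -> R -> R) :
  quasi_split_normal f -> quasi_split_normal (swap_xy f).
Proof.
  intros [Hc [R0 [f1 [f2 [S1 [S2 [Q1 [Q2 E]]]]]]]].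
  split; [now apply cond_i_iv_swap_xy|].
  exists R0, (swap_xy f1), (swap_xy f2).
  refine (conj (smooth2_swap_xy _ S1) (conj (smooth2_swap_xy _ S2)
           (conj (quasi_normal_swap_xy _ Q1) (conj (quasi_normal_swap_xy _ Q2) _)))).
  intros x y H. apply E. now rewrite norm2_sym.
Qed.

Lemma smooth2_is_derive_y (f : R -> R -> R) (l : list bool) (x y : R) : smooth2 f ->
  is_derive (fun t => iter_partial l f x t) y (iter_partial (false :: l) f x y).
Proof. intros Hs. apply Derive_correct, (proj1 (Hs l)). Qed.

Definition RInt_mul_inv_sq_decay (g : R -> R -> R) (v : R -> R) : Prop :=
  exists K X, forall x, X < Rabs x -> forall a b, a <= b ->
    Rabs (RInt (fun y => g x y * v y) a b) <= K / x ^ 2.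

Section Decay_against_bounded_primitive.

Variables (v U : R -> R) (Lv LU : R).
Hypothesis U_derive : forall t, is_derive U t (v t).
Hypothesis v_continuous : forall t, continuous v t.
Hypothesis U_bound : forall t, Rabs (U t) <= LU.
Hypothesis v_bound : forall t, Rabs (v t) <= Lv.

Lemma RInt_mul_inv_sq_decay_of_quasi_normal (f : R -> R -> R) :
  smooth2 f -> quasi_normal f -> RInt_mul_inv_sq_decay (dy f) v.
Proof.
  intros Hs [[_ [_ [_ [_ Hmod]]]] [_ [_ [[X0 [B Hzeros]] _]]]].
  destruct (moderate_decrease_sq _ Hmod) as [C [HC Hdf]].
  (* [zeros_localized] does not force [0 <= B], hence [Rabs B]. *)
  exists (16 * LU * C + 2 * Rabs B * (C * Lv)), (Rmax X0 1).
  intros x Hx a b Hab.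
  pose proof (Rmax_l X0 1). pose proof (Rmax_r X0 1).
  destruct (Hzeros x ltac:(lra)) as [N [M [HN [HMN Hz]]]].
  pose proof (one_lt_sq x ltac:(lra)) as Hx2.
  assert (Hx0 : x <> 0) by (intros ->; rewrite Rabs_R0 in *; lra).
  replace ((16 * LU * C + 2 * Rabs B * (C * Lv)) / x ^ 2)
    with (16 * LU * (C / x ^ 2) + 2 * Rabs B * (C / x ^ 2 * Lv)) by (field; exact Hx0).
  apply (abs_RInt_mul_le_zeros_localized (dy f x) (dy (dy f) x) v U) with N M; auto.
  - intros y. exact (smooth2_is_derive_y f (false :: nil) x y Hs).
  - intros y. exact (continuous_of_is_derive _ _ y (smooth2_is_derive_y f (false :: false :: nil) x y Hs)).
  - intros y. pose proof (pow2_ge_0 y).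
    eapply Rle_trans; [apply Hdf; lra | apply Rdiv_le_contravar; lra].
  - apply Rabs_pos.
  - pose proof (Rle_abs B). lra.
Qed.

Lemma RInt_mul_inv_sq_decay_of_quasi_split_normal (f : R -> R -> R) :
  quasi_split_normal f -> RInt_mul_inv_sq_decay (dy f) v.
Proof.
  intros [_ [R0 [f1 [f2 [S1 [S2 [Q1 [Q2 E]]]]]]]].
  destruct (RInt_mul_inv_sq_decay_of_quasi_normal f1 S1 Q1) as [K1 [X1 H1]].
  destruct (RInt_mul_inv_sq_decay_of_quasi_normal f2 S2 Q2) as [K2 [X2 H2]].
  exists (K1 + K2), (Rmax R0 (Rmax X1 X2)). intros x Hx a b Hab.
  pose proof (Rmax_l R0 (Rmax X1 X2)). pose proof (Rmax_r R0 (Rmax X1 X2)).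
  pose proof (Rmax_l X1 X2). pose proof (Rmax_r X1 X2).
  assert (Hsum : forall y, dy f x y = dy f1 x y + dy f2 x y).
  { intros y. unfold dy.
    rewrite (Derive_ext (fun t => f x t) (fun t => f1 x t + f2 x t))
      by (intros t; apply E; pose proof (norm2_ge_l x t); lra).
    apply Derive_plus; [apply (proj1 (S1 nil)) | apply (proj1 (S2 nil))]. }
  assert (Hc : forall (h : R -> R -> R), smooth2 h -> forall y, continuous (fun y => dy h x y * v y) y).
  { intros h Hh y. apply (continuous_mult (K := R_AbsRing)); auto.
    exact (continuous_of_is_derive _ _ y (smooth2_is_derive_y h (false :: nil) x y Hh)). }
  rewrite (RInt_ext _ (fun y => dy f1 x y * v y + dy f2 x y * v y))
    by (intros y _; rewrite Hsum; apply Rmult_plus_distr_r).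
  rewrite (RInt_plus (V := R_CompleteNormedModule)) by auto using ex_RInt_of_continuous.
  rewrite Rdiv_plus_distr. eapply Rle_trans; [apply Rabs_triang|].
  apply Rplus_le_compat; [apply H1 | apply H2]; auto; lra.
Qed.

End Decay_against_bounded_primitive.

Lemma inv_sq_bound_of_cases (G : R -> R) (B K X : R) :
  (forall x, 1 < Rabs x -> Rabs (G x) <= B) ->
  (forall x, X < Rabs x -> Rabs (G x) <= K / x ^ 2) ->
  exists C, 0 < C /\ forall x, 1 < Rabs x -> Rabs (G x) <= C / x ^ 2.
Proof.
  intros HB HK.
  pose proof (Rmax_l X 1) as HX. pose proof (Rmax_r X 1) as H1. set (X1 := Rmax X 1) in *.
  pose proof (Rabs_pos K). pose proof (Rabs_pos B). pose proof (pow2_ge_0 X1).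
  exists (Rabs K + Rabs B * X1 ^ 2 + 1). split; [nra|].
  intros x Hx. pose proof (one_lt_sq x Hx) as Hx2.
  apply (Rmult_le_reg_r (x ^ 2)); [lra|].
  replace ((Rabs K + Rabs B * X1 ^ 2 + 1) / x ^ 2 * x ^ 2) with (Rabs K + Rabs B * X1 ^ 2 + 1)
    by (field; intros ->; rewrite Rabs_R0 in Hx; lra).
  destruct (Rlt_le_dec X (Rabs x)) as [Hbig | Hsmall].
  - specialize (HK x Hbig).
    apply (Rmult_le_compat_r (x ^ 2)) in HK; [|lra].
    replace (K / x ^ 2 * x ^ 2) with K in HK by (field; intros ->; rewrite Rabs_R0 in Hx; lra).
    pose proof (Rle_abs K). nra.
  - assert (Hsq : x ^ 2 <= X1 ^ 2).
    { rewrite <- (pow2_abs x). pose proof (Rabs_pos x). simpl. nra. }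
    pose proof (HB x Hx). pose proof (Rle_abs B). pose proof (Rabs_pos (G x)). nra.
Qed.

Lemma fourier_limit_inv_sq_decay (f : R -> R -> R) (w v : R -> R) (Lv : R) :
  smooth2 f -> very_moderate_decrease f -> moderate_decrease (dy f) ->
  RInt_mul_inv_sq_decay (dy f) v ->
  (forall t, is_derive v t (w t)) -> (forall t, continuous w t) -> (forall t, Rabs (v t) <= Lv) ->
  exists G : R -> R,
    (forall x, is_lim (fun r => RInt (fun y => f x y * w y) (- r) r) p_infty (G x)) /\
    (exists C, 0 < C /\ forall x, 1 < Rabs x -> Rabs (G x) <= C / x ^ 2).
Proof.
  intros Hs Hvm Hm [K [X HK]] Hv Cw HLv.
  destruct (very_moderate_decrease_y f Hvm) as [Cf Hf].
  destruct (moderate_decrease_sq _ Hm) as [C [HC Hdf]].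
  assert (Lv0 : 0 <= Lv) by (specialize (HLv 0); pose proof (Rabs_pos (v 0)); lra).
  assert (Hdfv : forall x y, 1 < x ^ 2 + y ^ 2 ->
            Rabs (dy f x y * v y) <= C * Lv / (x ^ 2 + y ^ 2)).
  { intros x y Hxy. unfold Rdiv. rewrite Rmult_assoc, (Rmult_comm Lv), <- Rmult_assoc.
    apply Rabs_mul_le; auto. }
  assert (Cdfv : forall x y, continuous (fun t => dy f x t * v t) y).
  { intros x y. apply (continuous_mult (K := R_AbsRing)).
    - exact (continuous_of_is_derive _ _ y (smooth2_is_derive_y f (false :: nil) x y Hs)).
    - exact (continuous_of_is_derive _ _ y (Hv y)). }
  set (Q x r := RInt (fun y => dy f x y * v y) (- r) r).
  assert (HQ : forall x, is_lim (Q x) p_infty (real (Lim (Q x) p_infty))).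
  { intros x. apply Lim_correct', (ex_finite_lim_RInt_sym _ (2 * (C * Lv))); auto.
    intros y Hy. pose proof (one_lt_sq y Hy). pose proof (pow2_ge_0 x).
    eapply Rle_trans; [apply Hdfv; lra|].
    replace (2 * (C * Lv) / (1 + y ^ 2)) with (C * Lv / ((1 + y ^ 2) / 2)) by (field; lra).
    apply Rdiv_le_contravar; [nra | lra | lra]. }
  exists (fun x => - real (Lim (Q x) p_infty)). split.
  - intros x. apply (is_lim_RInt_sym_by_parts (f x) (dy f x) v w Cf Lv); auto.
    + intros y. exact (smooth2_is_derive_y f nil x y Hs).
    + intros y. exact (continuous_of_is_derive _ _ y (smooth2_is_derive_y f (false :: nil) x y Hs)).
    + exact (HQ x).
  - apply (inv_sq_bound_of_cases _ (C * Lv * PI) K X); intros x Hx; rewrite Rabs_Ropp;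
      apply (Rabs_lim_le (Q x) _ _ 0 (HQ x)); intros r Hr.
    + eapply Rle_trans; [apply (abs_RInt_le_atan _ (C * Lv)); auto; [lra|]|].
      * intros y _. pose proof (one_lt_sq x Hx). pose proof (pow2_ge_0 y).
        eapply Rle_trans; [apply Hdfv; lra | apply Rdiv_le_contravar; nra].
      * rewrite atan_opp. pose proof (atan_bound r). apply Rmult_le_compat_l; nra.
    + apply HK; lra.
Qed.

Lemma fourier_limit_of_bounded_primitives (f : R -> R -> R) (w v U : R -> R) (Lv LU : R) :
  smooth2 f -> quasi_normal f \/ quasi_split_normal f ->
  (forall t, is_derive v t (w t)) -> (forall t, is_derive U t (v t)) ->
  (forall t, continuous w t) ->
  (forall t, Rabs (v t) <= Lv) -> (forall t, Rabs (U t) <= LU) ->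
  exists G : R -> R,
    (forall x, is_lim (fun r => RInt (fun y => f x y * w y) (- r) r) p_infty (G x)) /\
    (exists C, 0 < C /\ forall x, 1 < Rabs x -> Rabs (G x) <= C / x ^ 2).
Proof.
  intros Hs Hq Hv HU Cw HLv HLU.
  assert (Cv : forall t, continuous v t) by (intros t; exact (continuous_of_is_derive _ _ t (Hv t))).
  assert (Hc : cond_i_iv f) by (destruct Hq as [[]|[]]; assumption).
  destruct Hc as [_ [_ [Hvm [_ Hm]]]].
  apply (fourier_limit_inv_sq_decay f w v Lv); auto.
  destruct Hq.
  - now apply (RInt_mul_inv_sq_decay_of_quasi_normal v U Lv LU).
  - now apply (RInt_mul_inv_sq_decay_of_quasi_split_normal v U Lv LU).
Qed.

Theorem fourier_y_moderate_decrease (f : R -> R -> R) :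
  smooth2 f -> quasi_normal f \/ quasi_split_normal f ->
  forall k : R, k <> 0 ->
    exists Gre Gim : R -> R,
      (forall x : R,
         is_lim (fun r => RInt (fun y => f x y * cos (k * y)) (- r) r) p_infty (Gre x) /\
         is_lim (fun r => RInt (fun y => - (f x y * sin (k * y))) (- r) r) p_infty (Gim x)) /\
      (exists C, 0 < C /\ forall x, 1 < Rabs x -> sqrt (Gre x ^ 2 + Gim x ^ 2) <= C / x ^ 2).
Proof.
  intros Hs Hq k Hk.
  assert (Hcos : forall t, Rabs (cos t) <= 1) by (intros; apply Rabs_le, COS_bound).
  assert (Hsin : forall t, Rabs (sin t) <= 1) by (intros; apply Rabs_le, SIN_bound).
  destruct (fourier_limit_of_bounded_primitives f (fun t => cos (k * t))
              (fun t => sin (k * t) / k) (fun t => - cos (k * t) / k ^ 2) (/ Rabs k) (/ Rabs (k ^ 2)) Hs Hq)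
    as [Gre [HGre [C1 [HC1 HB1]]]];
    [intros t; auto_derive; [auto | field; auto] ..
    | intros t; apply (ex_derive_continuous (V := R_NormedModule)); auto_derive; auto
    | intros t; apply Rabs_div_le_inv; auto
    | intros t; apply Rabs_div_le_inv; rewrite Rabs_Ropp; auto |].
  destruct (fourier_limit_of_bounded_primitives f (fun t => - sin (k * t))
              (fun t => cos (k * t) / k) (fun t => sin (k * t) / k ^ 2) (/ Rabs k) (/ Rabs (k ^ 2)) Hs Hq)
    as [Gim [HGim [C2 [HC2 HB2]]]];
    [intros t; auto_derive; [auto | field; auto] ..
    | intros t; apply (ex_derive_continuous (V := R_NormedModule)); auto_derive; auto
    | intros t; apply Rabs_div_le_inv; auto
    | intros t; apply Rabs_div_le_inv; auto |].
  exists Gre, Gim. split.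
  - intros x. split; [apply HGre|].
    eapply is_lim_ext; [|apply HGim]. intros r. simpl. apply RInt_ext. intros y _. symmetry. apply Ropp_mult_distr_r.
  - exists (C1 + C2). split; [lra|]. intros x Hx.
    rewrite Rdiv_plus_distr. apply sqrt_sum_sq_le; auto.
Qed.

Theorem lemma11 (f : R -> R -> R) :
  smooth2 f -> (quasi_normal f \/ quasi_split_normal f) ->
  (forall k1 : R, k1 <> 0 ->
     exists Fre Fim : R -> R,
       (forall y : R,
          is_lim (fun r => RInt (fun x => f x y * cos (k1 * x)) (- r) r) p_infty (Fre y) /\
          is_lim (fun r => RInt (fun x => - (f x y * sin (k1 * x))) (- r) r) p_infty (Fim y)) /\
       (exists C, 0 < C /\ forall y, 1 < Rabs y ->
          sqrt (Fre y ^ 2 + Fim y ^ 2) <= C / y ^ 2)) /\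
  (forall k2 : R, k2 <> 0 ->
     exists Gre Gim : R -> R,
       (forall x : R,
          is_lim (fun r => RInt (fun y => f x y * cos (k2 * y)) (- r) r) p_infty (Gre x) /\
          is_lim (fun r => RInt (fun y => - (f x y * sin (k2 * y))) (- r) r) p_infty (Gim x)) /\
       (exists C, 0 < C /\ forall x, 1 < Rabs x ->
          sqrt (Gre x ^ 2 + Gim x ^ 2) <= C / x ^ 2)).
Proof.
  intros Hs Hq. split.
  - apply (fourier_y_moderate_decrease (swap_xy f)); [now apply smooth2_swap_xy|].
    destruct Hq; [left; now apply quasi_normal_swap_xy | right; now apply quasi_split_normal_swap_xy].
  - now apply fourier_y_moderate_decrease.
Qed.
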